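(* Let $A,B,C$ be complex vector spaces with $\dim A\le \dim B=\dim C=\mathbf{b}$. Let $T\in A\otimes B\otimes C$ be a concise tensor such that the space $T(A^* )\subset B\otimes C$ has bounded rank $\mathbf{b}-1$ and is primitive. Then $T$ does not have border rank $\mathbf{b}$.
   Context: $T(A^* )$ is the image of the contraction $T_A:A^*\to B\otimes C$, a space of linear maps $B^*\to C$; write $\varphi(\alpha):B^*\to C$ for the map given by $\alpha\in A^*$. It has bounded rank $r$ if the maximal rank of its elements is $r<\min\{\dim B,\dim C\}$. $T$ is concise if the three induced maps $A^*\to B\otimes C$, $B^*\to A\otimes C$, $C^*\to A\otimes B$ are injective. A space $T(A^* )$ of bounded rank $r$ is imprimitive if there is a hyperplane $H\subset B^*$ such that all restrictions $\varphi(\alpha)|_H$ have rank $\le r-1$, or a hyperplane $H\subset C^*$ such that all restrictions $\varphi(\alpha)^{\mathbf t}|_H$ have rank $\le r-1$; otherwise it is primitive. Border rank of $T$: the smallest $s$ such that $T$ is a limit of sums of $s$ tensors of the form $a\otimes b\otimes c$. *)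

(* Complex numbers are modelled as R[i] = complex R for R : realType
   (a complete archimedean real field, i.e. the reals). Tensors in A (x) B (x) C are
   given in coordinates, with dim A = a, dim B = b, dim C = c. *)
From HB Require Import structures.
From mathcomp Require Import all_boot all_order all_algebra.
From mathcomp Require Import reals.
From mathcomp.real_closed Require Import complex.
Set Implicit Arguments. Unset Strict Implicit. Unset Printing Implicit Defensive.
Import Order.TTheory GRing.Theory Num.Theory.
Local Open Scope ring_scope.

Definition tensor (K : Type) (a b c : nat) := 'I_a -> 'I_b -> 'I_c -> K.

Section Tensors.
Variables (K : fieldType) (a b c : nat).
Implicit Types (T : tensor K a b c).

(* phi(alpha) : B^v -> C, as a b x c matrix acting on row vectors beta (beta *m M) *)
Definition slice T (alpha : 'I_a -> K) : 'M[K]_(b, c) :=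
  \matrix_(j, k) \sum_(i < a) alpha i * T i j k.

(* concise: the three contraction maps A^v -> B(x)C, B^v -> A(x)C, C^v -> A(x)B
   are injective (they are linear, so injectivity = trivial kernel) *)
Definition concise T : Prop :=
  [/\ (forall alpha : 'I_a -> K,
        (forall j k, \sum_(i < a) alpha i * T i j k = 0) -> forall i, alpha i = 0),
      (forall beta : 'I_b -> K,
        (forall i k, \sum_(j < b) beta j * T i j k = 0) -> forall j, beta j = 0)
    & (forall gamma : 'I_c -> K,
        (forall i j, \sum_(k < c) gamma k * T i j k = 0) -> forall k, gamma k = 0)].

Definition bounded_rank T (r : nat) : Prop :=
  [/\ (forall alpha, \rank (slice T alpha) <= r)%N,
      (exists alpha, \rank (slice T alpha) = r)
    & (r < minn b c)%N].

(* imprimitive (for bounded rank r): a hyperplane H of B^v (row space of a b x b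
   matrix of rank b-1) with all restrictions phi(alpha)|_H of rank <= r-1, or a
   hyperplane H of C^v with all phi(alpha)^t|_H of rank <= r-1 *)
Definition imprimitive T (r : nat) : Prop :=
  (exists H : 'M[K]_b, \rank H = b.-1 /\
     forall alpha, (\rank (H *m slice T alpha) < r)%N) \/
  (exists H : 'M[K]_c, \rank H = c.-1 /\
     forall alpha, (\rank (H *m (slice T alpha)^T) < r)%N).

Definition primitive T (r : nat) : Prop := ~ imprimitive T r.

End Tensors.

Section BorderRank.
Variables (R : realType) (a b c : nat).
Local Notation C := (R[i]).

(* T is a limit (entrywise, equivalently in the Euclidean topology of the finite-
   dimensional space A(x)B(x)C) of a sequence of sums of s rank-one tensors *)
Definition border_rank_le (T : tensor C a b c) (s : nat) : Prop :=
  exists (u : nat -> 'I_s -> 'I_a -> C) (v : nat -> 'I_s -> 'I_b -> C)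
         (w : nat -> 'I_s -> 'I_c -> C),
    forall i j k, forall eps : C, 0 < eps -> exists N : nat, forall n : nat, (N <= n)%N ->
      `| (\sum_(l < s) u n l i * v n l j * w n l k) - T i j k | < eps.

Definition has_border_rank (T : tensor C a b c) (s : nat) : Prop :=
  border_rank_le T s /\ forall s', border_rank_le T s' -> (s <= s')%N.

End BorderRank.

(* A tensor of border rank at most b = dim B = dim C is a limit of sums of b
   rank-one tensors, whose slices V diag(d) W satisfy X adj(Y) Z = Z adj(Y) X;
   these equations are closed, so they hold on T(A^* ).  Now let the slices be
   b x b of bounded rank b-1, pick Y0 of rank b-1 and W with adj(Y0) W <> 0.
   Adjugates of singular slices have rank <= 1, say p q, and the equations force
   all the rows q X to be proportional.  Let E be the span of the rows of
   adj(Y0 + t W) for t = 0 and sufficiently many t <> 0; by interpolation in t,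
   E X lies in E Y0 for every slice X, and E Y0 is smaller than E because the
   rows of adj(Y0) are killed by Y0.  E cannot be everything, since then all
   slices would have rows in E Y0 and a common kernel vector, against
   conciseness; so any hyperplane H containing E gives rank (H X) < b-1 for all
   slices X: T(A^* ) is imprimitive. *)

From HB Require Import structures.
From mathcomp Require Import all_boot all_order all_algebra.
From mathcomp Require Import reals.
From mathcomp.real_closed Require Import complex.
From mathcomp Require Import zify ring.
From Stdlib Require Import Classical.
Set Implicit Arguments. Unset Strict Implicit. Unset Printing Implicit Defensive.
Import Order.TTheory GRing.Theory Num.Theory.
Local Open Scope ring_scope.

Section AdjugateIdentities.
Variable K : fieldType.

Lemma det_neq0_mulmx_eq0 (R : idomainType) n (M A : 'M[R]_n) :
  \det M != 0 -> M *m A = 0 -> A = 0.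
Proof.
move=> detM MA; have : \adj M *m M *m A = 0 by rewrite -mulmxA MA mulmx0.
by rewrite mul_adj_mx mul_scalar_mx => /eqP; rewrite scalemx_eq0 (negbTE detM) => /eqP.
Qed.

(* ['X%:M + A]: invertible over [{poly K}], and equal to [A] at ['X = 0]. *)
Definition shift_mx n (A : 'M[K]_n) : 'M[{poly K}]_n := char_poly_mx (- A).

Lemma det_shift_mx_neq0 n (A : 'M[K]_n) : \det (shift_mx A) != 0.
Proof. exact: monic_neq0 (char_poly_monic _). Qed.

Lemma horner0_shift_mx n (A : 'M[K]_n) : map_mx (horner_eval 0) (shift_mx A) = A.
Proof.
apply/matrixP => i j; rewrite !mxE /horner_eval hornerD hornerN hornerC.
by rewrite hornerMn hornerX mul0rn sub0r opprK.
Qed.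

Lemma horner_polyC_mx p q (A : 'M[K]_(p, q)) t :
  map_mx (horner_eval t) (map_mx polyC A) = A.
Proof. by apply/matrixP => i j; rewrite !mxE /horner_eval hornerC. Qed.

Lemma adj_mulmx n (A B : 'M[K]_n) : \adj (A *m B) = \adj B *m \adj A.
Proof.
pose A' := shift_mx A; pose B' := shift_mx B.
have detAB' : \det (A' *m B') != 0 by rewrite det_mulmx mulf_neq0 ?det_shift_mx_neq0.
have adjAB' : \adj (A' *m B') = \adj B' *m \adj A'.
  apply/eqP; rewrite -subr_eq0; apply/eqP; apply: (det_neq0_mulmx_eq0 detAB').
  rewrite mulmxBr mul_mx_adj mulmxA -(mulmxA A') mul_mx_adj mul_mx_scalar.
  by rewrite -scalemxAl mul_mx_adj scale_scalar_mx det_mulmx mulrC subrr.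
have := congr1 (map_mx (horner_eval 0)) adjAB'.
by rewrite !map_mxM !map_mx_adj !map_mxM !horner0_shift_mx.
Qed.

Lemma adj_commute n (M A : 'M[K]_n) : M *m A = A *m M -> M *m \adj A = \adj A *m M.
Proof.
move=> MA; pose A' := shift_mx A; pose M' := map_mx polyC M.
have MA' : M' *m A' = A' *m M'.
  rewrite /A' /shift_mx /char_poly_mx mulmxBl mulmxBr scalar_mxC.
  by rewrite -!map_mxM mulmxN mulNmx MA.
have MadjA' : M' *m \adj A' = \adj A' *m M'.
  apply/eqP; rewrite -subr_eq0; apply/eqP.
  apply: (det_neq0_mulmx_eq0 (det_shift_mx_neq0 A)).
  by rewrite mulmxBr !mulmxA -MA' -(mulmxA M') !mul_mx_adj scalar_mxC subrr.
have := congr1 (map_mx (horner_eval 0)) MadjA'.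
by rewrite !map_mxM !map_mx_adj !horner0_shift_mx horner_polyC_mx.
Qed.

Lemma adj_singular_mulmx n (A : 'M[K]_n) : \det A = 0 -> \adj A *m A = 0.
Proof. by move=> detA; rewrite mul_adj_mx detA -scalemx1 scale0r. Qed.

End AdjugateIdentities.

Section AdjugateRank.
Variable K : fieldType.

Lemma cofactor_pid_mx m r (i j : 'I_m.+1) : (r <= m)%N ->
  (i != ord_max) || (j != ord_max) -> cofactor (pid_mx r : 'M[K]_m.+1) i j = 0.
Proof.
move=> rm; wlog im : i j / i != ord_max => [wlog_im /orP[im|jm]|_].
  - by rewrite wlog_im ?im.
  - by rewrite -cofactor_tr tr_pid_mx wlog_im ?jm.
rewrite /cofactor; case: (unliftP i ord_max) => [k max_k|eq_i].
  2: by rewrite -eq_i eqxx in im.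
rewrite (expand_det_row _ k) big1 ?mulr0 // => l _.
by rewrite !mxE -max_k /= ltnNge rm andbF mul0r.
Qed.

Lemma adj_pid_mx m r : (r <= m)%N -> \adj (pid_mx r : 'M[K]_m.+1) =
  cofactor (pid_mx r : 'M[K]_m.+1) ord_max ord_max *: delta_mx ord_max ord_max.
Proof.
move=> rm; apply/matrixP => i j; rewrite !mxE.
have [->|jm] := eqVneq j ord_max; have [->|im] := eqVneq i ord_max;
  by rewrite ?mulr1 ?mulr0 // cofactor_pid_mx ?im ?jm ?orbT.
Qed.

Lemma cofactor_pid_mx_max m : cofactor (pid_mx m : 'M[K]_m.+1) ord_max ord_max = 1.
Proof.
rewrite /cofactor -signr_odd addnn odd_double mul1r -[RHS](det1 _ m); congr (\det _).
by apply/matrixP => i j; rewrite !mxE !lift_max ltn_ord andbT.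
Qed.

Lemma unitmx_adj n (A : 'M[K]_n) : A \in unitmx -> \adj A \in unitmx.
Proof.
move=> uA; have detA : \det A != 0 by rewrite -unitfE -unitmxE.
have -> : \adj A = \det A *: invmx A by rewrite /invmx uA scalerA mulfV ?scale1r.
by rewrite unitmxZ ?unitmx_inv ?unitfE.
Qed.

Lemma mxrank_adj n (A : 'M[K]_n) :
  \rank (\adj A) = \rank (\adj (pid_mx (\rank A) : 'M[K]_n)).
Proof.
rewrite -{1}(mulmx_ebase A) !adj_mulmx mulmxA mxrankMfree; last first.
  by rewrite row_free_unit unitmx_adj ?col_ebase_unit.
by rewrite eqmxMfull // row_full_unit unitmx_adj ?row_ebase_unit.
Qed.

Lemma det_eq0_rank n (A : 'M[K]_n) : (\det A == 0) = (\rank A < n)%N.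
Proof.
rewrite -[_ == 0]negbK -unitfE -unitmxE -row_free_unit /row_free.
by rewrite ltn_neqAle rank_leq_row andbT.
Qed.

Lemma mxrank_adj_le1 n (A : 'M[K]_n) : \det A = 0 -> (\rank (\adj A) <= 1)%N.
Proof.
case: n A => [|m] A /eqP; first by rewrite (leq_trans (rank_leq_row _)).
rewrite det_eq0_rank ltnS => rA; rewrite mxrank_adj adj_pid_mx //.
by rewrite (leq_trans (mxrank_scale _ _)) ?mxrank_delta.
Qed.

Lemma adj_corank1_neq0 m (A : 'M[K]_m.+1) : \rank A = m -> \adj A != 0.
Proof.
move=> rA; rewrite -mxrank_eq0 mxrank_adj rA adj_pid_mx //.
by rewrite cofactor_pid_mx_max scale1r mxrank_delta.
Qed.

Lemma kermx_corank1 m (A : 'M[K]_m.+1) : \rank A = m -> (kermx A :=: \adj A)%MS.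
Proof.
move=> rA; have detA : \det A = 0 by apply/eqP; rewrite det_eq0_rank rA.
have adj_ker : (\adj A <= kermx A)%MS by rewrite sub_kermx adj_singular_mulmx.
apply/eqmxP; rewrite adj_ker andbT -(mxrank_leqif_sup adj_ker).
by rewrite eqn_leq mxrankS // mxrank_ker rA subSnn lt0n mxrank_eq0 adj_corank1_neq0.
Qed.

End AdjugateRank.

Section RowSpaces.
Variable K : fieldType.

Lemma exists_row_neq0 m n (A : 'M[K]_(m, n)) : A != 0 -> exists i, row i A != 0.
Proof.
move=> A_neq0; apply/existsP; apply: contraNT A_neq0; rewrite negb_exists => /forallP A0.
by apply/eqP/row_matrixP => i; rewrite row0; apply/eqP/negbNE.
Qed.

Lemma exists_col_ker k n (A : 'M[K]_(k, n)) : (\rank A < n)%N ->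
  exists2 c : 'cV_n, c != 0 & A *m c = 0.
Proof.
move=> rA; have : kermx A^T != 0.
  by rewrite -mxrank_eq0 mxrank_ker mxrank_tr subn_eq0 -ltnNge.
case/exists_row_neq0 => i x_neq0; exists (row i (kermx A^T))^T; first by rewrite trmx_eq0.
by apply: trmx_inj; rewrite trmx_mul trmxK trmx0; apply/sub_kermxP/row_sub.
Qed.

Lemma exists_hyperplane_sup k n (E : 'M[K]_(k, n)) : (\rank E < n)%N ->
  exists H : 'M_n, \rank H = n.-1 /\ (E <= H)%MS.
Proof.
case/exists_col_ker => c c_neq0 Ec; exists (kermx c).
by rewrite mxrank_ker -mxrank_tr rank_rV trmx_eq0 c_neq0 subn1 sub_kermx Ec.
Qed.

Lemma mxrank_mul_sub k l n p (E : 'M[K]_(k, n)) (H : 'M_(l, n)) (X : 'M_(n, p)) :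
  (E <= H)%MS -> (\rank (H *m X) + \rank E <= \rank (E *m X) + \rank H)%N.
Proof.
move=> sEH; have := mxrankS (capmxS sEH (submx_refl (kermx X))).
by rewrite -(mxrank_mul_ker H X) -(mxrank_mul_ker E X); lia.
Qed.

Lemma row_outer_mx m n (u : 'cV[K]_m) (v : 'rV_n) i : row i (u *m v) = u i 0 *: v.
Proof. by apply/rowP => j; rewrite !mxE big_ord1. Qed.

Lemma outer_mx_sub m n (u u' : 'cV[K]_m) (v v' : 'rV_n) :
  u *m v = u' *m v' -> u != 0 -> (v <= v')%MS.
Proof.
move=> uv u_neq0; have [i ui] : exists i, u i 0 != 0.
  apply/existsP; apply: contraNT u_neq0; rewrite negb_exists => /forallP u0.
  by apply/eqP/colP => i; rewrite mxE; apply/eqP/negbNE.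
have := congr1 (fun w => (u i 0)^-1 *: row i w) uv.
by rewrite /= !row_outer_mx !scalerA mulVf // scale1r => ->; apply: scalemx_sub.
Qed.

Lemma outer_mx_eq0 m n (u : 'cV[K]_m) (v : 'rV_n) : u *m v = 0 -> u != 0 -> v = 0.
Proof.
move=> uv u_neq0; apply: (@submx0null _ 1).
by apply: (outer_mx_sub (u' := u)) u_neq0; rewrite uv mulmx0.
Qed.

Lemma rank1_decomp m n (A : 'M[K]_(m, n)) : (\rank A <= 1)%N -> A != 0 ->
  exists i (p : 'cV_m), p != 0 /\ A = p *m row i A.
Proof.
move=> rA A_neq0; have [i Ai] := exists_row_neq0 A_neq0.
have sA : (A <= row i A)%MS.
  by rewrite -(mxrank_leqif_sup (row_sub i A)) eqn_leq mxrankS ?row_sub // rank_rV Ai.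
exists i, (A *m pinvmx (row i A)); rewrite mulmxKpV //; split=> //.
by apply: contraNneq A_neq0 => p0; rewrite -(mulmxKpV sA) p0 mul0mx.
Qed.

Lemma singular_pencil_adj_mul_sub n (A B : 'M[K]_n) t :
  \det (A + t *: B) = 0 -> t != 0 -> (\adj (A + t *: B) *m B <= \adj (A + t *: B) *m A)%MS.
Proof.
move=> det0 t_neq0; set C := \adj _.
have : C *m A + t *: (C *m B) = 0 by rewrite scalemxAr -mulmxDr adj_singular_mulmx.
rewrite addrC => /eqP; rewrite addr_eq0 => /eqP/(congr1 ( *:%R t^-1)).
by rewrite scalerA mulVf // scale1r => ->; apply: scalemx_sub; rewrite eqmx_opp.
Qed.

End RowSpaces.

Section PolyMatrixRowSpace.
Variable K : fieldType.

Lemma horner_mx_sub p q r (P : 'M[{poly K}]_(p, q)) (F : 'M[K]_(r, q)) (s : seq K) :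
  uniq s -> (forall i j, size (P i j) <= size s)%N ->
  {in s, forall t, (map_mx (horner_eval t) P <= F)%MS} ->
  forall x, (map_mx (horner_eval x) P <= F)%MS.
Proof.
move=> s_uniq sizeP Ps x; pose Q := P *m map_mx polyC (cokermx F).
have horner_Q t : map_mx (horner_eval t) Q = map_mx (horner_eval t) P *m cokermx F.
  by rewrite map_mxM horner_polyC_mx.
suff Q0 : Q = 0 by rewrite submxE -horner_Q Q0 map_mx0.
apply/matrixP => i j; rewrite [RHS]mxE; apply: (roots_geq_poly_eq0 _ s_uniq).
  apply/allP => t /Ps; rewrite submxE -horner_Q => /eqP/matrixP/(_ i j).
  by rewrite !mxE => Qt; apply/rootP.
rewrite mxE; elim/big_ind: _ => [|f g f_le g_le|l _]; first by rewrite size_poly0.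
  by rewrite (leq_trans (size_polyD _ _)) // geq_max f_le g_le.
by rewrite mxE mulrC mul_polyC (leq_trans (size_scale_leq _ _)).
Qed.

End PolyMatrixRowSpace.

Section StrassenCorankOneSpace.
Variables (K : numFieldType) (m : nat) (L : 'M[K]_m.+1 -> Prop).
Local Notation n := m.+1.
Hypothesis L_comb : forall X Y t, L X -> L Y -> L (X + t *: Y).
Hypothesis L_singular : forall X, L X -> \det X = 0.
Hypothesis L_strassen : forall X Y Z, L X -> L Y -> L Z ->
  X *m \adj Y *m Z = Z *m \adj Y *m X.
Hypothesis L_lker : forall x : 'rV_n, (forall X, L X -> x *m X = 0) -> x = 0.
Hypothesis L_rker : forall x : 'cV_n, (forall X, L X -> X *m x = 0) -> x = 0.

Lemma adj_rank1_mul_sub Z X Y (p : 'cV_n) (q : 'rV_n) : L Z -> L X -> L Y ->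
  \adj Z = p *m q -> p != 0 -> q *m Y != 0 -> (q *m X <= q *m Y)%MS.
Proof.
move=> LZ LX LY adjZ p_neq0 qY_neq0.
have swap U V : L U -> L V -> (U *m p) *m (q *m V) = (V *m p) *m (q *m U).
  by move=> LU LV; rewrite !mulmxA -!(mulmxA _ p q) -adjZ L_strassen.
have [U LU Up_neq0] : exists2 U, L U & U *m p != 0.
  apply: NNPP => noU; move/eqP: p_neq0; apply; apply: L_rker => U LU.
  by apply/eqP; apply: contraT => Up_neq0; exfalso; apply: noU; exists U.
have Yp_neq0 : Y *m p != 0.
  apply: contraNneq qY_neq0 => Yp0; apply/eqP/(outer_mx_eq0 _ Up_neq0).
  by rewrite swap // Yp0 mul0mx.
exact: outer_mx_sub (swap Y X LY LX) Yp_neq0.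
Qed.

Section Pencil.
Variables Y0 W : 'M[K]_n.
Hypotheses (LY0 : L Y0) (rankY0 : \rank Y0 = m) (LW : L W).
Hypothesis adjY0W_neq0 : \adj Y0 *m W != 0.

Let P : 'M[{poly K}]_n :=
  \adj (map_mx polyC Y0 + 'X *: map_mx polyC W) *m map_mx polyC W.
Let d := (\max_i \max_j size (P i j))%N.
(* [d] bounds the sizes of the entries of [P], so that [horner_mx_sub] applies
   to the [d] sample points [k.+1]. *)
Definition pencil_span := (\adj Y0 + \sum_(k < d) \adj (Y0 + k.+1%:R *: W))%MS.
Local Notation E := pencil_span.
Local Notation F := (pencil_span *m Y0).

Lemma horner_pencil t : map_mx (horner_eval t) P = \adj (Y0 + t *: W) *m W.
Proof.
rewrite map_mxM map_mx_adj horner_polyC_mx; congr (\adj _ *m _).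
by apply/matrixP => i j; rewrite !mxE rmorphD rmorphM /= !horner_evalE hornerX !hornerC.
Qed.

Lemma adj_pencil_sub_span (k : 'I_d) : (\adj (Y0 + k.+1%:R *: W) <= E)%MS.
Proof. exact: submx_trans (sumsmx_sup k _ _) (addsmxSr _ _). Qed.

Lemma adj0_mulW_sub : (\adj Y0 *m W <= F)%MS.
Proof.
pose s := [seq k.+1%:R | k <- iota 0 d] : seq K.
have s_uniq : uniq s.
  by rewrite map_inj_uniq ?iota_uniq // => x y /eqP; rewrite eqr_nat eqSS => /eqP.
have := horner_pencil 0; rewrite scale0r addr0 => <-.
apply: horner_mx_sub s_uniq _ _ 0 => [i j|t /mapP[k]].
  by rewrite size_map size_iota (leq_trans _ (leq_bigmax i)) ?(leq_bigmax j).
rewrite mem_iota add0n => /andP[_ k_lt_d] ->; rewrite horner_pencil.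
have tk : k.+1%:R != 0 :> K by rewrite pnatr_eq0.
apply: submx_trans (singular_pencil_adj_mul_sub (L_singular (L_comb _ LY0 LW)) tk) _.
exact: submxMr (adj_pencil_sub_span (Ordinal k_lt_d)).
Qed.

Lemma adj0_mul_sub X : L X -> (\adj Y0 *m X <= F)%MS.
Proof.
move=> LX; have [i [p [p_neq0 adjY0]]] :=
  rank1_decomp (mxrank_adj_le1 (L_singular LY0)) (adj_corank1_neq0 rankY0).
set q := row i _ in adjY0.
have qW_neq0 : q *m W != 0.
  by apply: contraNneq adjY0W_neq0 => qW0; rewrite adjY0 -mulmxA qW0 mulmx0.
rewrite adjY0 -mulmxA; apply: submx_trans (submxMl _ _) _.
apply: submx_trans (adj_rank1_mul_sub LY0 LX LW adjY0 p_neq0 qW_neq0) _.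
by rewrite -row_mul; apply: submx_trans (row_sub _ _) adj0_mulW_sub.
Qed.

Lemma adj_pencil_mul_sub (k : 'I_d) X : L X ->
  (\adj (Y0 + k.+1%:R *: W) *m X <= F)%MS.
Proof.
move=> LX; set Yk := Y0 + _ *: W; have LYk : L Yk := L_comb _ LY0 LW.
have [->|adj_neq0] := eqVneq (\adj Yk) 0; first by rewrite mul0mx sub0mx.
have [i [p [p_neq0 adjYk]]] := rank1_decomp (mxrank_adj_le1 (L_singular LYk)) adj_neq0.
set q := row i _ in adjYk.
rewrite adjYk -mulmxA; apply: submx_trans (submxMl _ _) _.
have [qY0|qY0_neq0] := eqVneq (q *m Y0) 0.
  have : (q <= \adj Y0)%MS by rewrite -(kermx_corank1 rankY0); apply/sub_kermxP.
  by move/(submxMr X)/submx_trans; apply; apply: adj0_mul_sub.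
apply: submx_trans (adj_rank1_mul_sub LYk LX LY0 adjYk p_neq0 qY0_neq0) _.
exact: submxMr (submx_trans (row_sub _ _) (adj_pencil_sub_span k)).
Qed.

Lemma pencil_span_mul_sub X : L X -> (E *m X <= F)%MS.
Proof.
move=> LX; rewrite addsmxMr addsmx_sub adj0_mul_sub //= sumsmxMr.
by apply/sumsmx_subP => k _; apply: adj_pencil_mul_sub.
Qed.

Lemma mxrank_pencil_image_lt : (\rank F < \rank E)%N.
Proof.
have sub_cap : (\adj Y0 <= E :&: kermx Y0)%MS.
  rewrite sub_capmx /pencil_span addsmxSl sub_kermx.
  by rewrite (adj_singular_mulmx (L_singular LY0)) eqxx.
have := mxrankS sub_cap; rewrite -(mxrank_mul_ker E Y0).
have := adj_corank1_neq0 rankY0; rewrite -mxrank_eq0 -lt0n => /leq_trans/[apply].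
by rewrite -{1}[\rank F]addn0 ltn_add2l.
Qed.

End Pencil.

Theorem strassen_corank1_imprimitive Y0 : L Y0 -> \rank Y0 = m ->
  exists H : 'M_n, \rank H = m /\ forall X, L X -> (\rank (H *m X) < m)%N.
Proof.
move=> LY0 rankY0; have [W LW adjY0W_neq0] : exists2 W, L W & \adj Y0 *m W != 0.
  apply: NNPP => noW; move/eqP: (adj_corank1_neq0 rankY0); apply.
  apply/row_matrixP => i; rewrite row0; apply: L_lker => X LX.
  have adjX0 : \adj Y0 *m X = 0.
    by apply: NNPP => ?; apply: noW; exists X => //; apply/eqP.
  by rewrite -row_mul adjX0 row0.
set E := pencil_span Y0 W.
have EX X : L X -> (E *m X <= E *m Y0)%MS by apply: pencil_span_mul_sub.
have rankFE : (\rank (E *m Y0) < \rank E)%N by apply: mxrank_pencil_image_lt.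
have [rankE|] := ltnP (\rank E) n.
  have [H [rankH sEH]] := exists_hyperplane_sup rankE; exists H; split=> // X LX.
  by have := mxrank_mul_sub X sEH; have := mxrankS (EX X LX); lia.
rewrite leq_eqVlt ltnNge rank_leq_col orbF => /eqP/esym E_full.
have [c c_neq0 Fc] := exists_col_ker (leq_trans rankFE (rank_leq_col E)).
case/eqP: c_neq0; apply: L_rker => X LX.
have : (X <= E *m Y0)%MS.
  by apply: submx_trans (EX X LX); rewrite eqmxMfull /row_full ?E_full.
by case/submxP => D ->; rewrite -mulmxA Fc mulmx0.
Qed.

End StrassenCorankOneSpace.

Section RankDecomposition.
Variable K : fieldType.

Definition rank1_sum a b c s (u : 'I_s -> 'I_a -> K) (v : 'I_s -> 'I_b -> K)
  (w : 'I_s -> 'I_c -> K) : tensor K a b c :=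
  fun i j k => \sum_(l < s) u l i * v l j * w l k.

Definition strassen_adj a n (T : tensor K a n n) : Prop := forall al be ga,
  slice T al *m \adj (slice T be) *m slice T ga =
  slice T ga *m \adj (slice T be) *m slice T al.

Lemma diag_mx_comm n (d e : 'rV[K]_n) : diag_mx d *m diag_mx e = diag_mx e *m diag_mx d.
Proof.
apply/matrixP => i j; rewrite !mul_diag_mx !mxE.
by have [->|_] := eqVneq i j; rewrite ?mulr0n ?mulr0 // mulrC.
Qed.

Lemma strassen_adj_diag n (V W : 'M[K]_n) (d1 d2 d3 : 'rV_n) :
  let X d := V *m diag_mx d *m W in
  X d1 *m \adj (X d2) *m X d3 = X d3 *m \adj (X d2) *m X d1.
Proof.
move=> X; rewrite /X !adj_mulmx.
suff assoc e1 e3 : V *m diag_mx e1 *m W *m (\adj W *m (\adj (diag_mx d2) *m \adj V)) *m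
    (V *m diag_mx e3 *m W) =
    (\det W * \det V) *: (V *m (\adj (diag_mx d2) *m (diag_mx e1 *m diag_mx e3)) *m W).
  by rewrite !assoc diag_mx_comm.
have adj_d2 : diag_mx e1 *m \adj (diag_mx d2) = \adj (diag_mx d2) *m diag_mx e1.
  exact/adj_commute/diag_mx_comm.
rewrite !mulmxA -(mulmxA _ W) mul_mx_adj mul_mx_scalar -!scalemxAl.
rewrite -(mulmxA _ (\adj V)) mul_adj_mx mul_mx_scalar -!scalemxAl !scalemxAl scalerA.
by rewrite -!mulmxA (mulmxA (diag_mx e1)) adj_d2 !mulmxA.
Qed.

Lemma slice_rank1_sum a n (u : 'I_n -> 'I_a -> K) (v w : 'I_n -> 'I_n -> K) al :
  slice (rank1_sum u v w) al =
  (\matrix_(j, l) v l j) *m diag_mx (\row_l \sum_i al i * u l i) *m \matrix_(l, k) w l k.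
Proof.
apply/matrixP => j k; rewrite mul_mx_diag !mxE.
under eq_bigr do rewrite mulr_sumr.
rewrite exchange_big; apply: eq_bigr => l _; rewrite !mxE mulr_sumr mulr_suml.
by apply: eq_bigr => i _; ring.
Qed.

Lemma strassen_adj_rank1_sum a n (u : 'I_n -> 'I_a -> K) (v w : 'I_n -> 'I_n -> K) :
  strassen_adj (rank1_sum u v w).
Proof. by move=> al be ga; rewrite !slice_rank1_sum strassen_adj_diag. Qed.

End RankDecomposition.

Section SequenceLimits.
Variable K : numFieldType.
Implicit Types (x y : nat -> K) (l k : K).

Definition null_seq x := forall eps : K, 0 < eps ->
  exists N, forall n, (N <= n)%N -> `|x n| < eps.

Definition cvg_to x l := null_seq (fun n => x n - l).

Lemma eq_null_seq x y : x =1 y -> null_seq x -> null_seq y.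
Proof. by move=> xy x0 eps /x0[N xN]; exists N => n /xN; rewrite xy. Qed.

Lemma null_seqD x y : null_seq x -> null_seq y -> null_seq (fun n => x n + y n).
Proof.
move=> x0 y0 eps eps_gt0; have eps2_gt0 : 0 < eps / 2%:R by rewrite divr_gt0 ?ltr0n.
have [[Nx xN] [Ny yN]] := (x0 _ eps2_gt0, y0 _ eps2_gt0).
exists (maxn Nx Ny) => n; rewrite geq_max => /andP[/xN xn /yN yn].
by rewrite (le_lt_trans (ler_normD _ _)) // [eps]splitr ltrD.
Qed.

Lemma null_seqZ k x : null_seq x -> null_seq (fun n => k * x n).
Proof.
move=> x0 eps eps_gt0; have [->|k_neq0] := eqVneq k 0.
  by exists 0%N => n _; rewrite mul0r normr0.
have kn_gt0 : 0 < `|k| by rewrite normr_gt0.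
have [N xN] := x0 _ (divr_gt0 eps_gt0 kn_gt0).
by exists N => n /xN; rewrite normrM -ltr_pdivlMl // mulrC.
Qed.

Lemma null_seqM x y : null_seq x -> null_seq y -> null_seq (fun n => x n * y n).
Proof.
move=> x0 y0 eps eps_gt0; have [[Nx xN] [Ny yN]] := (x0 _ ltr01, y0 _ eps_gt0).
exists (maxn Nx Ny) => n; rewrite geq_max => /andP[/xN xn /yN yn].
by rewrite normrM (le_lt_trans _ yn) // ler_piMl // ltW.
Qed.

Lemma cvg_to_cst l : cvg_to (fun=> l) l.
Proof. by move=> eps eps_gt0; exists 0%N => n _; rewrite subrr normr0. Qed.

Lemma cvg_toD x y l k : cvg_to x l -> cvg_to y k -> cvg_to (fun n => x n + y n) (l + k).
Proof. by move=> xl yk; apply: eq_null_seq (null_seqD xl yk) => n; ring. Qed.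

Lemma cvg_toZ c x l : cvg_to x l -> cvg_to (fun n => c * x n) (c * l).
Proof. by move=> xl; apply: eq_null_seq (null_seqZ c xl) => n; ring. Qed.

Lemma cvg_toM x y l k : cvg_to x l -> cvg_to y k -> cvg_to (fun n => x n * y n) (l * k).
Proof.
move=> xl yk.
have := null_seqD (null_seqD (null_seqM xl yk) (null_seqZ l yk)) (null_seqZ k xl).
by apply: eq_null_seq => n; ring.
Qed.

Lemma eq_cvg_to x y l : x =1 y -> cvg_to x l -> cvg_to y l.
Proof. by move=> xy; apply: eq_null_seq => n; rewrite xy. Qed.

Lemma cvg_to_sum (I : Type) (r : seq I) (P : pred I) (x : I -> nat -> K) (l : I -> K) :
  (forall i, cvg_to (x i) (l i)) ->
  cvg_to (fun n => \sum_(i <- r | P i) x i n) (\sum_(i <- r | P i) l i).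
Proof.
move=> xl; elim: r => [|i r IHr].
  by rewrite big_nil; apply: eq_cvg_to (cvg_to_cst 0) => n; rewrite big_nil.
rewrite big_cons; case: ifP => Pi.
  by apply: eq_cvg_to (cvg_toD (xl i) IHr) => n; rewrite big_cons Pi.
by apply: eq_cvg_to IHr => n; rewrite big_cons Pi.
Qed.

Lemma cvg_to_prod (I : Type) (r : seq I) (P : pred I) (x : I -> nat -> K) (l : I -> K) :
  (forall i, cvg_to (x i) (l i)) ->
  cvg_to (fun n => \prod_(i <- r | P i) x i n) (\prod_(i <- r | P i) l i).
Proof.
move=> xl; elim: r => [|i r IHr].
  by rewrite big_nil; apply: eq_cvg_to (cvg_to_cst 1) => n; rewrite big_nil.
rewrite big_cons; case: ifP => Pi.
  by apply: eq_cvg_to (cvg_toM (xl i) IHr) => n; rewrite big_cons Pi.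
by apply: eq_cvg_to IHr => n; rewrite big_cons Pi.
Qed.

Lemma cvg_to_eq0 x l : (forall n, x n = 0) -> cvg_to x l -> l = 0.
Proof.
move=> x0 xl; apply/eqP; apply: contraT => l_neq0.
have := xl `|l|; rewrite normr_gt0 => /(_ l_neq0)[N xN].
by have := xN N (leqnn N); rewrite x0 sub0r normrN ltxx.
Qed.

Definition mx_cvg_to p q (X : nat -> 'M[K]_(p, q)) (A : 'M_(p, q)) :=
  forall i j, cvg_to (fun n => X n i j) (A i j).

Lemma mx_cvg_toM p q r (X : nat -> 'M[K]_(p, q)) (Y : nat -> 'M_(q, r)) A B :
  mx_cvg_to X A -> mx_cvg_to Y B -> mx_cvg_to (fun n => X n *m Y n) (A *m B).
Proof.
move=> XA YB i j; rewrite mxE.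
have := cvg_to_sum (index_enum 'I_q) xpredT (fun h => cvg_toM (XA i h) (YB h j)).
by apply: eq_cvg_to => n; rewrite mxE.
Qed.

Lemma mx_cvg_toB p q (X Y : nat -> 'M[K]_(p, q)) A B :
  mx_cvg_to X A -> mx_cvg_to Y B -> mx_cvg_to (fun n => X n - Y n) (A - B).
Proof.
move=> XA YB i j; rewrite !mxE -mulN1r.
by apply: eq_cvg_to (cvg_toD (XA i j) (cvg_toZ (-1) (YB i j))) => n; rewrite !mxE mulN1r.
Qed.

Lemma cvg_to_det p (X : nat -> 'M[K]_p) A :
  mx_cvg_to X A -> cvg_to (fun n => \det (X n)) (\det A).
Proof.
move=> XA; apply: cvg_to_sum => s; apply: cvg_toZ.
by apply: cvg_to_prod => i; apply: XA.
Qed.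

Lemma mx_cvg_to_adj p (X : nat -> 'M[K]_p) A :
  mx_cvg_to X A -> mx_cvg_to (fun n => \adj (X n)) (\adj A).
Proof.
move=> XA i j; rewrite !mxE.
apply: (eq_cvg_to (x := fun n => cofactor (X n) j i)) => [n|].
  by rewrite mxE.
apply: cvg_toZ; apply: cvg_to_det => k l; rewrite mxE.
by rewrite mxE; apply: (eq_cvg_to _ (XA _ _)) => n; rewrite !mxE.
Qed.

End SequenceLimits.

Section Slices.
Variables (K : fieldType) (a b c : nat).
Implicit Types (T : tensor K a b c) (al be : 'I_a -> K).

Lemma slice_comb T al be t :
  slice T (fun i => al i + t * be i) = slice T al + t *: slice T be.
Proof.
apply/matrixP => j k; rewrite !mxE mulr_sumr -big_split.
by apply: eq_bigr => i _ /=; ring.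
Qed.

Lemma slice_basis T i j k : slice T (fun i' => (i' == i)%:R) j k = T i j k.
Proof.
rewrite mxE (bigD1 i) //= eqxx mul1r big1 ?addr0 // => i' /negbTE->.
by rewrite mul0r.
Qed.

Lemma concise_slice_lker T : concise T ->
  forall x : 'rV_b, (forall al, x *m slice T al = 0) -> x = 0.
Proof.
case=> _ concB _ x x0; apply/rowP => j; rewrite mxE.
apply: (concB (fun j' => x 0 j')) => i k.
have /rowP/(_ k) := x0 (fun i' => (i' == i)%:R); rewrite !mxE => xk0.
by rewrite -[RHS]xk0; apply: eq_bigr => j' _; rewrite slice_basis.
Qed.

Lemma concise_slice_rker T : concise T ->
  forall x : 'cV_c, (forall al, slice T al *m x = 0) -> x = 0.
Proof.
case=> _ _ concC x x0; apply/colP => k; rewrite mxE.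
apply: (concC (fun k' => x k' 0)) => i j.
have /colP/(_ j) := x0 (fun i' => (i' == i)%:R); rewrite !mxE => xj0.
by rewrite -[RHS]xj0; apply: eq_bigr => k' _; rewrite slice_basis mulrC.
Qed.

End Slices.

Section StrassenClosed.
Variables (K : numFieldType) (a n : nat).
Variables (S : nat -> tensor K a n n) (T : tensor K a n n).
Hypothesis S_cvg : forall i j k, cvg_to (fun l => S l i j k) (T i j k).

Lemma mx_cvg_to_slice al : mx_cvg_to (fun l => slice (S l) al) (slice T al).
Proof.
move=> j k; rewrite mxE.
have := cvg_to_sum (index_enum 'I_a) xpredT (fun i => cvg_toZ (al i) (S_cvg i j k)).
by apply: eq_cvg_to => l; rewrite mxE.
Qed.

Lemma strassen_adj_limit : (forall l, strassen_adj (S l)) -> strassen_adj T.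
Proof.
move=> S_strassen al be ga; apply/eqP; rewrite -subr_eq0; apply/eqP/matrixP => i j.
have cvg_prod al' ga' := mx_cvg_toM (mx_cvg_toM (mx_cvg_to_slice al')
  (mx_cvg_to_adj (mx_cvg_to_slice be))) (mx_cvg_to_slice ga').
rewrite [RHS]mxE.
apply: (cvg_to_eq0 _ (mx_cvg_toB (cvg_prod al ga) (cvg_prod ga al) i j)) => l.
by rewrite S_strassen subrr mxE.
Qed.

End StrassenClosed.

Lemma border_rank_le_strassen_adj (R : realType) a n (T : tensor R[i] a n n) :
  border_rank_le T n -> strassen_adj T.
Proof.
case=> u [v [w uvw]].
apply: (strassen_adj_limit (S := fun l => rank1_sum (u l) (v l) (w l))) => [i j k|l].
  exact: uvw.
exact: strassen_adj_rank1_sum.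
Qed.

Theorem mainTheorem6 (R : realType) (a b : nat) (T : tensor R[i] a b b) :
  (a <= b)%N ->
  concise T ->
  bounded_rank T b.-1 ->
  primitive T b.-1 ->
  ~ has_border_rank T b.
Proof.
move=> _ concT [rank_le [al0 rank_al0] rank_lt] primT [brT _].
case: b T concT rank_le rank_al0 rank_lt primT brT
  => [|m] T concT rank_le rank_al0 + primT brT.
  by rewrite minnn.
move=> _; apply: primT; left.
pose L X := exists al, X = slice T al.
have L_comb X Y t : L X -> L Y -> L (X + t *: Y).
  by case=> [al ->] [be ->]; exists (fun i => al i + t * be i); rewrite slice_comb.
have L_singular X : L X -> \det X = 0.
  by case=> [al ->]; apply/eqP; rewrite det_eq0_rank ltnS rank_le.
have L_strassen X Y Z : L X -> L Y -> L Z -> X *m \adj Y *m Z = Z *m \adj Y *m X.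
  by case=> [al ->] [be ->] [ga ->]; apply: border_rank_le_strassen_adj.
have L_lker (x : 'rV_m.+1) : (forall X, L X -> x *m X = 0) -> x = 0.
  by move=> x0; apply: (concise_slice_lker concT) => al; apply: x0; exists al.
have L_rker (x : 'cV_m.+1) : (forall X, L X -> X *m x = 0) -> x = 0.
  by move=> x0; apply: (concise_slice_rker concT) => al; apply: x0; exists al.
have [H [rankH HX]] := strassen_corank1_imprimitive L_comb L_singular L_strassen
  L_lker L_rker (ex_intro _ al0 erefl) rank_al0.
by exists H; split=> // al; apply: HX; exists al.
Qed.
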